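(* Let $(\Omega,\mathcal{F})$ be a measurable space and $T:\Omega\to\Omega$ a measurable map. Let $\mathbb{V}(A)=\sup_{P\in\Theta}P(A)$, $A\in\mathcal{F}$, be an upper probability, where $\Theta=\{P \text{ probability on }(\Omega,\mathcal{F}) : P(A)\le \mathbb{V}(A)\ \forall A\in\mathcal{F}\}$. Assume $\mathbb{V}$ is continuous (from above), $T$-invariant, and $T$-ergodic. Let $\Theta_0$ be the set of $T$-invariant probabilities in $\Theta$. Then for every $A\in\mathcal{I}$ with $\mathbb{V}(A)>0$ there exists $P'\in\Theta_0$ with $P'(A)=1$.
   Context: $\mathcal{I}=\{A\in\mathcal{F}: T^{-1}A=A\}$ is the $T$-invariant $\sigma$-algebra. $\mathbb{V}$ is continuous if $\mathbb{V}(A_n)\to 0$ whenever $A_n\in\mathcal{F}$, $A_n\downarrow\emptyset$. $\mathbb{V}$ is $T$-invariant if $\mathbb{V}(T^{-1}A)=\mathbb{V}(A)$ for all $A\in\mathcal{F}$. A continuous upper probability $\mathbb{V}$ is $T$-ergodic if $\mathbb{V}(A)\in\{0,1\}$ for every $A\in\mathcal{I}$. A probability $P$ is $T$-invariant if $P(T^{-1}A)=P(A)$ for all $A\in\mathcal{F}$. *)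

From HB Require Import structures.
From mathcomp Require Import all_boot all_order all_algebra.
From mathcomp Require Import all_classical all_reals all_analysis.
Set Implicit Arguments. Unset Strict Implicit. Unset Printing Implicit Defensive.
Import Order.TTheory GRing.Theory Num.Theory.
Local Open Scope classical_set_scope.
Local Open Scope ring_scope.
Local Open Scope ereal_scope.

Section UpperProb.
Context {d : measure_display} {Om : measurableType d} {R : realType}.

Definition Theta (V : set Om -> \bar R) : set (probability Om R) :=
  [set P | forall A, measurable A -> P A <= V A].

Definition is_upper_probability (V : set Om -> \bar R) : Prop :=
  forall A, measurable A -> V A = ereal_sup [set P A | P in Theta V].

Definition V_continuous (V : set Om -> \bar R) : Prop :=
  forall A : nat -> set Om, (forall n, measurable (A n)) ->
    (forall n, A n.+1 `<=` A n) -> \bigcap_n A n = set0 ->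
    V (A n) @[n --> \oo] --> 0.

Definition invariant_sets (T : Om -> Om) : set (set Om) :=
  [set A | measurable A /\ T @^-1` A = A].

Definition V_Tinvariant (V : set Om -> \bar R) (T : Om -> Om) : Prop :=
  forall A, measurable A -> V (T @^-1` A) = V A.

Definition V_Tergodic (V : set Om -> \bar R) (T : Om -> Om) : Prop :=
  forall A, invariant_sets T A -> V A = 0 \/ V A = 1.

Definition prob_Tinvariant (T : Om -> Om) (P : probability Om R) : Prop :=
  forall A, measurable A -> P (T @^-1` A) = P A.

Definition Theta0 (V : set Om -> \bar R) (T : Om -> Om) : set (probability Om R) :=
  [set P | Theta V P /\ prob_Tinvariant T P].

End UpperProb.

(* Since A is invariant, ergodicity forces V(A) = 1, so Theta contains
   probabilities P_n with P_n(A) -> 1.  Average P_n along the orbit: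
   m_n(B) = (1/(n+1)) sum_(k <= n) P_n(T^-k B).  Each m_n is still dominated by
   V (V is T-invariant), gives A the mass P_n(A) (A is invariant), and is
   T-invariant up to 1/(n+1).  A limit m along an ultrafilter refining the
   cofinite filter is therefore a finitely additive, T-invariant, normalised
   set function with m <= V and m(A) = 1.  Domination by V transfers the
   continuity of V at the empty set to m, which makes m a probability. *)

From HB Require Import structures.
From mathcomp Require Import all_boot all_order all_algebra.
From mathcomp Require Import all_classical all_reals all_analysis.
From mathcomp Require Import lra.
Set Implicit Arguments.
Unset Strict Implicit.
Unset Printing Implicit Defensive.
Import Order.TTheory GRing.Theory Num.Theory.
Import numFieldNormedType.Exports.
Local Open Scope classical_set_scope.
Local Open Scope ring_scope.

Lemma ultra_cvg_compact {I : Type} {X : ptopologicalType} (U : set_system I)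
    (K : set X) (u : I -> X) :
  UltraFilter U -> compact K -> (forall i, K (u i)) -> cvg (u @ U).
Proof.
move=> UU cK Ku; apply/cvg_ex.
have [|p [_ clp]] := cK (u @ U) (fmap_proper_filter u ultra_proper).
  exact: (@filterE _ U _ (u @^-1` K)).
exists p => N Np; have [//|UNc] := in_ultra_setVsetC (u @^-1` N) UU.
by have [x [] //] := clp (~` N) N UNc Np.
Qed.

Section mean.
Context {R : realFieldType}.

Lemma mean_le n (f : nat -> R) (c : R) : (forall k, f k <= c) ->
  (\sum_(k < n.+1) f k) / n.+1%:R <= c.
Proof.
move=> fc; rewrite ler_pdivrMr ?ltr0Sn //.
apply: le_trans (ler_sum _ (fun (k : 'I_n.+1) _ => fc k)) _.
by rewrite sumr_const card_ord mulr_natr.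
Qed.

Lemma mean_cst n (c : R) : (\sum_(k < n.+1) c) / n.+1%:R = c.
Proof. by rewrite sumr_const card_ord -[c *+ _]mulr_natr mulfK ?pnatr_eq0. Qed.

End mean.

Lemma bigcup_geS {T : Type} (F : nat -> set T) n :
  \bigcup_(i >= n) F i = F n `|` \bigcup_(i >= n.+1) F i.
Proof.
apply/seteqP; split => [x [i /= + Fix]|x [Fnx|[i /= ni Fix]]].
- by rewrite leq_eqVlt => /orP[/eqP ->|ni]; [left|right; exists i].
- by exists n => /=.
- by exists i => //=; exact: ltnW.
Qed.

Lemma trivIset_setI_bigcup_geS {T : Type} (F : nat -> set T) n :
  trivIset setT F -> F n `&` \bigcup_(i >= n.+1) F i = set0.
Proof.
move=> tF; apply/seteqP; split => // x [Fnx [i /= ni Fix]].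
suff ni' : n = i by rewrite ni' ltnn in ni.
by apply: tF => //; exists x.
Qed.

Lemma trivIset_bigcap_bigcup_ge {T : Type} (F : nat -> set T) :
  trivIset setT F -> \bigcap_n \bigcup_(i >= n) F i = set0.
Proof.
move=> tF; apply/seteqP; split => // x Fx.
have [i _ Fix] := Fx 0%N I; have [j /= ij Fjx] := Fx i.+1 I.
suff ij' : i = j by rewrite ij' ltnn in ij.
by apply: tF => //; exists x.
Qed.

Section continuous_prob_content.
Context {d : measure_display} {T : measurableType d} {R : realType}.

Record continuous_prob_content (m : set T -> R) : Prop :=
  ContinuousProbContent {
  pcontent_ge0 : forall B, 0 <= m B ;
  pcontent0 : m set0 = 0 ;
  pcontentT : m setT = 1 ;
  pcontentU : forall X Y, measurable X -> measurable Y -> X `&` Y = set0 ->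
    m (X `|` Y) = m X + m Y ;
  pcontent_cvg0 : forall B : nat -> set T, (forall n, measurable (B n)) ->
    (forall n, B n.+1 `<=` B n) -> \bigcap_n B n = set0 ->
    m (B n) @[n --> \oo] --> 0 }.

Variables (m : set T -> R) (mP : continuous_prob_content m).

Lemma pcontent_bigcup_ge (F : nat -> set T) n :
  (forall i, measurable (F i)) -> trivIset setT F ->
  m (\bigcup_i F i) = \sum_(0 <= i < n) m (F i) + m (\bigcup_(i >= n) F i).
Proof.
move=> mF tF; elim: n => [|n IH].
  rewrite big_geq // add0r; congr m.
  by apply/seteqP; split => x [i _ Fix]; exists i.
have mG : measurable (\bigcup_(i >= n.+1) F i).
  by apply: bigcup_measurable => i _.
rewrite IH big_nat_recr //= -addrA -pcontentU ?trivIset_setI_bigcup_geS //.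
by rewrite -bigcup_geS.
Qed.

Lemma pcontent_semi_sigma_additive : semi_sigma_additive (fun B => (m B)%:E).
Proof.
move=> F mF tF _.
have mG n : measurable (\bigcup_(i >= n) F i).
  by apply: bigcup_measurable => i _.
have G0 : m (\bigcup_(i >= n) F i) @[n --> \oo] --> 0.
  apply: (pcontent_cvg0 mP mG); last exact: trivIset_bigcap_bigcup_ge.
  by move=> n; rewrite [X in _ `<=` X]bigcup_geS; exact: subsetUr.
have sumE n : \sum_(0 <= i < n) m (F i) =
    m (\bigcup_i F i) - m (\bigcup_(i >= n) F i).
  by rewrite (pcontent_bigcup_ge n mF tF) addrK.
under eq_fun => n do rewrite sumEFin sumE.
apply: cvg_EFin; first exact: nearW.
by rewrite -[X in _ --> X]subr0; apply: cvgB; [exact: cvg_cst|exact: G0].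
Qed.

Definition pcontent_measure (B : set T) : \bar R := (m B)%:E.

Lemma pcontent_measure_ge0 B : (0 <= pcontent_measure B)%E.
Proof. by rewrite lee_fin; exact: pcontent_ge0. Qed.

HB.instance Definition _ := isMeasure.Build _ _ _ pcontent_measure
  (congr1 EFin (pcontent0 mP)) pcontent_measure_ge0
  pcontent_semi_sigma_additive.

HB.instance Definition _ :=
  Measure_isProbability.Build _ _ _ pcontent_measure
    (congr1 EFin (pcontentT mP)).

Lemma pcontent_probability :
  exists P : probability T R, forall B, P B = (m B)%:E.
Proof. by exists pcontent_measure. Qed.

End continuous_prob_content.

Lemma preimage_iter_invariant {Om : Type} (T : Om -> Om) (A : set Om) k :
  T @^-1` A = A -> iter k T @^-1` A = A.
Proof. by move=> TA; elim: k => [//|k IH]; rewrite -[in RHS]IH -[in RHS]TA. Qed.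

Lemma fine_probability_le1 {d : measure_display} {Om : measurableType d}
    {R : realType} (P : probability Om R) B :
  measurable B -> fine (P B) <= 1.
Proof.
by move=> mB; rewrite -lee_fin fineK ?fin_num_measure ?probability_le1.
Qed.

Section orbit_mean.
Context {d : measure_display} {Om : measurableType d} {R : realType}.
Variable T : Om -> Om.
Hypothesis mT : measurable_fun setT T.

Lemma measurable_preimage B : measurable B -> measurable (T @^-1` B).
Proof. by move=> mB; rewrite -[T @^-1` B]setTI; exact: mT. Qed.

Lemma measurable_preimage_iter k B :
  measurable B -> measurable (iter k T @^-1` B).
Proof.
elim: k B => [//|k IH] B mB.
by apply: (IH (T @^-1` B)); exact: measurable_preimage.
Qed.

Lemma V_Tinvariant_iter (V : set Om -> \bar R) k B :
  V_Tinvariant V T -> measurable B -> V (iter k T @^-1` B) = V B.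
Proof.
move=> VT; elim: k B => [//|k IH] B mB.
by rewrite -(VT B mB); apply: IH; exact: measurable_preimage.
Qed.

Definition orbit_mean (P : probability Om R) n B : R :=
  (\sum_(k < n.+1) fine (P (iter k T @^-1` B))) / n.+1%:R.

Variable P : probability Om R.

Lemma orbit_mean_ge0 n B : 0 <= orbit_mean P n B.
Proof. by rewrite divr_ge0 // sumr_ge0 // => k _; rewrite fine_ge0. Qed.

Lemma orbit_mean_le1 n B : measurable B -> orbit_mean P n B <= 1.
Proof.
move=> mB; apply: (@mean_le _ n (fun k => fine (P (iter k T @^-1` B)))) => k.
exact/fine_probability_le1/measurable_preimage_iter.
Qed.

Lemma orbit_mean0 n : orbit_mean P n set0 = 0.
Proof.
by rewrite /orbit_mean big1 ?mul0r // => k _; rewrite preimage_set0 measure0.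
Qed.

Lemma orbit_meanT n : orbit_mean P n setT = 1.
Proof.
rewrite /orbit_mean -[RHS](mean_cst n); congr (_ / _); apply: eq_bigr => k _.
by rewrite preimage_setT probability_setT.
Qed.

Lemma orbit_meanU n X Y : measurable X -> measurable Y -> X `&` Y = set0 ->
  orbit_mean P n (X `|` Y) = orbit_mean P n X + orbit_mean P n Y.
Proof.
move=> mX mY XY0; rewrite /orbit_mean -mulrDl -big_split /=.
congr (_ / _); apply: eq_bigr => k _.
have mXk := measurable_preimage_iter k mX.
have mYk := measurable_preimage_iter k mY.
rewrite preimage_setU measureU // ?fineD ?fin_num_measure //.
by rewrite -preimage_setI XY0 preimage_set0.
Qed.

Lemma orbit_mean_invariant n A : T @^-1` A = A -> orbit_mean P n A = fine (P A).
Proof.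
move=> TA; rewrite /orbit_mean -[RHS](mean_cst n); congr (_ / _).
by apply: eq_bigr => k _; rewrite preimage_iter_invariant.
Qed.

Lemma orbit_mean_preimage n B : measurable B ->
  `|orbit_mean P n (T @^-1` B) - orbit_mean P n B| <= n.+1%:R^-1.
Proof.
move=> mB; pose f k := fine (P (iter k T @^-1` B)).
have f01 k : 0 <= f k <= 1.
  rewrite /f fine_ge0 ?measure_ge0 //=.
  exact/fine_probability_le1/measurable_preimage_iter.
have -> : orbit_mean P n (T @^-1` B) - orbit_mean P n B =
    (f n.+1 - f 0%N) / n.+1%:R.
  rewrite /orbit_mean -mulrBl -sumrB; congr (_ / _).
  by rewrite -(big_mkord xpredT (fun k => f k.+1 - f k)) telescope_sumr.
rewrite normrM normfV normr_nat; apply: ler_piMl; rewrite ?invr_ge0 //.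
have [/andP[? ?] /andP[? ?]] := (f01 n.+1, f01 0%N).
by rewrite ler_norml; apply/andP; split; lra.
Qed.

Lemma orbit_mean_le_upper (V : set Om -> \bar R) n B :
    V_Tinvariant V T -> Theta V P -> measurable B ->
  ((orbit_mean P n B)%:E <= V B)%E.
Proof.
move=> VT PV mB.
have PkV k : (P (iter k T @^-1` B) <= V B)%E.
  by rewrite -(V_Tinvariant_iter k VT mB); exact/PV/measurable_preimage_iter.
have Pkfin k := fin_num_measure P _ (measurable_preimage_iter k mB).
move: PkV; case: (V B) => [r| |] PkV; last 2 first.
- by rewrite leey.
- by have := PkV 0%N; rewrite leeNy_eq -[P _]fineK ?Pkfin.
rewrite lee_fin; apply: (@mean_le _ n (fun k => fine (P (iter k T @^-1` B)))).
by move=> k; rewrite -lee_fin fineK ?Pkfin.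
Qed.

End orbit_mean.

Section orbit_mean_ultralimit.
Context {d : measure_display} {Om : measurableType d} {R : realType}.
Variables (T : Om -> Om) (V : set Om -> \bar R).
Hypotheses (mT : measurable_fun setT T) (VT : V_Tinvariant V T).
Variables (U : set_system nat) (P : nat -> probability Om R).
Hypotheses (UU : UltraFilter U) (sU : \oo `<=` U).
Hypothesis PV : forall n, Theta V (P n).

(* The truncation at [1] only matters for non-measurable [B], where [P n B] is
   junk; it keeps the sequence in the compact [0, 1], so the limit exists. *)
Definition orbit_ulim B : R :=
  lim ((fun n => Num.min (orbit_mean T (P n) n B) 1) @ U).

Lemma is_cvg_orbit_mean_min B :
  cvg ((fun n => Num.min (orbit_mean T (P n) n B) 1) @ U).
Proof.
apply: (ultra_cvg_compact UU (@segment_compact R 0 1)) => n.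
by rewrite /= in_itv /= le_min orbit_mean_ge0 ler01 ge_min lexx orbT.
Qed.

Lemma cvg_orbit_ulim B : measurable B ->
  (fun n => orbit_mean T (P n) n B) @ U --> orbit_ulim B.
Proof.
move=> mB; have -> : (fun n => orbit_mean T (P n) n B) =
    (fun n => Num.min (orbit_mean T (P n) n B) 1).
  by apply/funext => n; rewrite min_l ?orbit_mean_le1.
exact: is_cvg_orbit_mean_min.
Qed.

Lemma orbit_ulim_eq B l : measurable B ->
  (fun n => orbit_mean T (P n) n B) @ U --> l -> orbit_ulim B = l.
Proof.
move=> mB /(cvg_lim (@Rhausdorff R)) <-.
exact/esym/(cvg_lim (@Rhausdorff R))/cvg_orbit_ulim.
Qed.

Lemma orbit_ulim_ge0 B : 0 <= orbit_ulim B.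
Proof.
apply: limr_ge; first exact: is_cvg_orbit_mean_min.
by apply: nearW => n; rewrite le_min orbit_mean_ge0 ler01.
Qed.

Lemma orbit_ulim0 : orbit_ulim set0 = 0.
Proof.
apply: orbit_ulim_eq => //; under eq_fun => n do rewrite orbit_mean0.
exact: cvg_cst.
Qed.

Lemma orbit_ulimT : orbit_ulim setT = 1.
Proof.
apply: orbit_ulim_eq => //; under eq_fun => n do rewrite orbit_meanT.
exact: cvg_cst.
Qed.

Lemma orbit_ulimU X Y : measurable X -> measurable Y -> X `&` Y = set0 ->
  orbit_ulim (X `|` Y) = orbit_ulim X + orbit_ulim Y.
Proof.
move=> mX mY XY0; apply: orbit_ulim_eq; first exact: measurableU.
under eq_fun => n do rewrite orbit_meanU //.
by apply: cvgD; exact: cvg_orbit_ulim.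
Qed.

Lemma orbit_ulim_le_upper B : measurable B -> ((orbit_ulim B)%:E <= V B)%E.
Proof.
move=> mB; have cV n := orbit_mean_le_upper mT n VT (PV n) mB.
move: cV; case: (V B) => [r| |] cV; last 2 first.
- by rewrite leey.
- by have := le_trans (orbit_mean_ge0 _ _ 0 B : (0 <= _%:E)%E) (cV 0%N).
rewrite lee_fin; apply: (cvgr_to_le (cvg_orbit_ulim mB)).
by apply: nearW => n; rewrite -lee_fin.
Qed.

Lemma orbit_ulim_cvg0 : V_continuous V -> forall B : nat -> set Om,
  (forall n, measurable (B n)) -> (forall n, B n.+1 `<=` B n) ->
  \bigcap_n B n = set0 -> orbit_ulim (B n) @[n --> \oo] --> 0.
Proof.
move=> Vc B mB decB B0.
have : (orbit_ulim (B n))%:E @[n --> \oo] --> 0%E.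
  apply: (squeeze_cvge _ (cvg_cst 0%E) (Vc B mB decB B0)).
  by apply: nearW => n; rewrite lee_fin orbit_ulim_ge0 orbit_ulim_le_upper.
by move/fine_cvgP => [].
Qed.

Lemma orbit_ulim_preimage B : measurable B ->
  orbit_ulim (T @^-1` B) = orbit_ulim B.
Proof.
move=> mB; have mTB := measurable_preimage mT mB.
have D0 : (fun n => orbit_mean T (P n) n (T @^-1` B) - orbit_mean T (P n) n B)
    @ \oo --> 0.
  apply: (@squeeze_cvgr _ _ _ _ (fun n => - harmonic n) harmonic).
  - by apply: nearW => n; rewrite /= -ler_norml; exact: orbit_mean_preimage.
  - by rewrite -oppr0; apply: cvgN; exact: cvg_harmonic.
  - exact: cvg_harmonic.
apply/subr0_eq.
have /(cvg_lim (@Rhausdorff R)) <- := cvg_trans (cvg_app _ sU) D0.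
by apply/esym/(cvg_lim (@Rhausdorff R)); apply: cvgB; exact: cvg_orbit_ulim.
Qed.

Lemma orbit_ulim_invariant A : measurable A -> T @^-1` A = A ->
  (fun n => fine (P n A)) @ \oo --> (1 : R) -> orbit_ulim A = 1.
Proof.
move=> mA TA PA1; apply: orbit_ulim_eq => //.
under eq_fun => n do rewrite orbit_mean_invariant //.
exact: cvg_trans (cvg_app _ sU) PA1.
Qed.

Lemma orbit_ulim_continuous_prob_content :
  V_continuous V -> continuous_prob_content orbit_ulim.
Proof.
move=> Vc; apply: ContinuousProbContent.
- exact: orbit_ulim_ge0.
- exact: orbit_ulim0.
- exact: orbit_ulimT.
- exact: orbit_ulimU.
- exact: orbit_ulim_cvg0.
Qed.

End orbit_mean_ultralimit.

Lemma upper_probability_approx {d : measure_display} {Om : measurableType d}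
    {R : realType} (V : set Om -> \bar R) A :
  is_upper_probability V -> measurable A -> V A = 1%E ->
  exists2 P : nat -> probability Om R,
    forall n, Theta V (P n) & (fun n => fine (P n A)) @ \oo --> (1 : R).
Proof.
move=> Vup mA VA1.
have /choice[P PA] n : exists P : probability Om R,
    Theta V P /\ ((1 - n.+1%:R^-1)%:E < P A)%E.
  have : ((1 - n.+1%:R^-1)%:E < ereal_sup [set Q A | Q in Theta V])%E.
    by rewrite -Vup // VA1 lte_fin gtrBl invr_gt0.
  by case/ereal_sup_gt => _ [Q QV <-] QA; exists Q.
exists P => [n|]; first exact: (PA n).1.
apply: (@squeeze_cvgr _ _ _ _ (fun n => 1 - harmonic n) (fun=> 1)).
- apply: nearW => n /=; rewrite fine_probability_le1 // andbT.
  have := (PA n).2.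
  by rewrite -[P n A]fineK ?fin_num_measure // lte_fin => /ltW.
- rewrite -[X in _ --> X]subr0.
  by apply: cvgB; [exact: cvg_cst|exact: cvg_harmonic].
- exact: cvg_cst.
Qed.

Local Open Scope ereal_scope.

Theorem lemma3p1 (d : measure_display) (Om : measurableType d) (R : realType)
  (T : Om -> Om) (V : set Om -> \bar R) :
  measurable_fun setT T ->
  is_upper_probability V ->
  V_continuous V ->
  V_Tinvariant V T ->
  V_Tergodic V T ->
  forall A, invariant_sets T A -> 0 < V A ->
  exists P' : probability Om R, Theta0 V T P' /\ P' A = 1.
Proof.
move=> mT Vup Vc VT Verg A [mA TA] VA_gt0.
have VA1 : V A = 1.
  by case: (Verg A (conj mA TA)) => // VA0; rewrite VA0 ltxx in VA_gt0.
have [P PV PA1] := upper_probability_approx Vup mA VA1.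
have [U [UU sU]] := (@ultraFilterLemma nat \oo eventually_filter).
have [P' P'E] := pcontent_probability
  (orbit_ulim_continuous_prob_content mT VT UU PV Vc).
exists P'; split; [split|].
- by move=> B mB; rewrite P'E; exact: orbit_ulim_le_upper.
- by move=> B mB; rewrite !P'E (orbit_ulim_preimage mT P UU sU mB).
- by rewrite P'E (orbit_ulim_invariant mT UU sU mA TA PA1).
Qed.
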